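(* Let $\mathcal A=[m]$, $1\le k\le m$, $\mathcal E=2^{\mathcal A}$. Then $$\sqrt{\tfrac{2}{\pi}}\cdot\frac{2^{2^m}}{2^m\cdot m!}\le\mathrm{Ndim}(\mathcal F_{\mathrm{sGST}})\le2^{2^m}\log(k+2).$$
   Context: $\mathcal A_k$ is the set of $k$-subsets of $\mathcal A$. Profiles are $P\in\mathcal E^n$, $n\ge1$; $\mathrm{Hist}(P)\in\mathbb Z_{\ge0}^{\mathcal E}$ counts occurrences. For $G\subseteq\mathcal E$, $\vec w_G$ is its indicator vector; $\vec1$ the all-ones vector. For $\tau:\mathcal A_k\times2^{\mathcal E}\to\{0,\dots,k+1\}$, $\mathrm{GST}_\tau$ maps $P$ to the set of $W\in\mathcal A_k$ with $\left(\vec w_G-\frac{\tau(W,G)}{k}\vec1\right)\cdot\mathrm{Hist}(P)<0$ for all $G\subseteq\mathcal E$. $\mathrm{GST}_\tau$ is symmetric if for every permutation $\sigma$ of $\mathcal A$, every $W\in\mathcal A_k$ and $G\subseteq\mathcal E$, $\tau(W,G)=\tau(\sigma(W),\sigma(G))$, where $\sigma(G)=\{\sigma(A):A\in G\}$. $\mathcal F_{\mathrm{sGST}}$ is the set of all symmetric GST axioms. Natarajan dimension: a finite set of profiles $\mathcal P$ is shattered by $\mathcal F$ if there are $f^0,f^1$ with $f^0(P)\ne f^1(P)$ on $\mathcal P$ such that for every $B\subseteq\mathcal P$ some $f\in\mathcal F$ equals $f^0$ on $B$ and $f^1$ on $\mathcal P\setminus B$; $\mathrm{Ndim}$ is the largest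 size of a shattered set. Logarithms are base 2. *)

From mathcomp Require Import all_boot all_fingroup all_algebra.
Set Implicit Arguments. Unset Strict Implicit. Unset Printing Implicit Defensive.
Import GRing.Theory Num.Theory.

(* A profile is a finite sequence of elements of E (length n >= 1 imposed where used). *)
Definition profile (m : nat) := seq {set 'I_m}.

Definition hist (m : nat) (P : profile m) : {ffun {set 'I_m} -> nat} :=
  [ffun e => count_mem e P].

Definition wvec (m : nat) (G : {set {set 'I_m}}) : {ffun {set 'I_m} -> rat} :=
  [ffun e => (((e \in G) : nat)%:R)%R].

Definition GST (m k : nat) (tau : {set 'I_m} -> {set {set 'I_m}} -> nat)
    (P : profile m) : {set {set 'I_m}} :=
  [set W : {set 'I_m} | (#|W| == k) &&
     [forall G : {set {set 'I_m}},
        (\sum_(e : {set 'I_m}) (wvec G e - (tau W G)%:R / k%:R) * (hist P e)%:R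
           < (0 : rat))%R]].

(* tau : A_k x 2^E -> {0,..,k+1}, symmetric under permutations of A.
   Only values on k-subsets W matter (tau is a function on A_k). *)
Definition sym_tau (m k : nat) (tau : {set 'I_m} -> {set {set 'I_m}} -> nat) : Prop :=
  (forall (W : {set 'I_m}) (G : {set {set 'I_m}}), #|W| = k -> tau W G <= k.+1) /\
  (forall (s : {perm 'I_m}) (W : {set 'I_m}) (G : {set {set 'I_m}}), #|W| = k ->
     tau W G = tau (s @: W) [set (s @: e) | e : {set 'I_m} in G]).

(* A finite set of profiles (a duplicate-free list of nonempty profiles) shattered
   by F_sGST (Natarajan). Subsets B of the set are given by boolean predicates. *)
Definition sGST_shattered (m k : nat) (S : seq (profile m)) : Prop :=
  uniq S /\ all (fun P => 0 < size P) S /\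
  exists f0 f1 : profile m -> {set {set 'I_m}},
    (forall P, P \in S -> f0 P != f1 P) /\
    forall B : profile m -> bool,
      exists tau, sym_tau k tau /\
        forall P, P \in S -> GST k tau P = (if B P then f0 P else f1 P).

Definition sGST_Ndim_is (m k d : nat) : Prop :=
  (exists S : seq (profile m), sGST_shattered k S /\ size S = d) /\
  (forall S : seq (profile m), sGST_shattered k S -> size S <= d).

(* A symmetric [tau] is determined by its row [tau W0] at one [k]-set [W0], as
   permutations act transitively on [k]-sets.  Rows are maps from [2^E] to
   [{0, ..., k+1}] and distinct labellings of a shattered set need distinct rows,
   so a shattered set has size at most [log2 ((k+2)^(2^(2^m)))].
   Conversely, take as profiles one representative [r] of each orbit of the
   permutation action on the families of [2^(m-1)] ballots, each ballot listed once,
   with [f0] the set of all committees and [f1] empty.  Threshold [k+1] never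
   excludes a committee, while threshold [k] at [G] excludes every committee from
   the profile [r] exactly when [r \subset G], that is [G = r] inside the layer;
   so threshold [k] on the orbits of the representatives labelled [f1] realises
   any labelling.  The layer has [binomial (2^m) (2^(m-1)) >= 2^(2^m) / 2^m]
   families, each orbit has at most [m!] of them, and [sqrt (2/PI) <= 1]. *)

From mathcomp Require Import all_boot all_fingroup alt primitive_action zify.
(* Imported only inside [Section Layer]: their [%R] (ring) scope would shadow
   the real-number scope in which [theorem10] is stated. *)
From mathcomp Require all_order all_algebra.
From Stdlib Require Import Classical ClassicalEpsilon.
From Stdlib Require Reals Lra Psatz.

Set Implicit Arguments. Unset Strict Implicit. Unset Printing Implicit Defensive.

Lemma card_set (T : finType) : #|{set T}| = 2 ^ #|T|.
Proof. by have := card_powerset [set: T]; rewrite powersetT !cardsT. Qed.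

Lemma ex_set_card (T : finType) k : k <= #|T| -> exists A : {set T}, #|A| = k.
Proof.
move=> kT; have : 0 < #|[set A : {set T} | #|A| == k]| by rewrite card_draws bin_gt0.
by rewrite card_gt0 => /set0Pn[A]; rewrite inE => /eqP; exists A.
Qed.

Lemma perm_imset_card (T : finType) (A B : {set T}) :
  #|A| = #|B| -> exists s : {perm T}, s @: A = B.
Proof.
move=> eqAB; have enumB : size (enum B) == #|A| by rewrite -cardE eqAB.
have dt (C : {set T}) (t : #|A|.-tuple T) :
    t = enum C :> seq T -> t \in #|A|.-dtuple(setT).
  by move=> tC; rewrite inE tC enum_uniq; apply/subsetP.
have [s _ /(congr1 val)/= sAB] := atransP2
  (ntransitive_weak (max_card A) (Sym_trans T))
  (dt A [tuple of enum A] erefl) (dt B (Tuple enumB) erefl).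
exists s; apply/setP=> x; rewrite -[x \in B]mem_enum sAB.
by apply/imsetP/mapP=> -[y yA ->]; exists y; rewrite ?mem_enum in yA *.
Qed.

Lemma leq_card_orbit_transversal (aT : finGroupType) (D : {group aT}) (rT : finType)
    (to : action D rT) (G : {group aT}) (S : {set rT}) :
  [acts G, on S | to] -> #|S| <= #|G| * #|orbit_transversal to G S|.
Proof.
move=> GactsS; have [trX _ _ _] := orbit_transversalP GactsS.
rewrite (card_transversal trX) mulnC -sum_nat_const.
rewrite (card_partition (orbit_partition GactsS)).
by apply: leq_sum => _ /imsetP[x _ ->]; apply: leq_imset_card.
Qed.

Lemma leq_card_rel (A T : finType) (R : A -> T -> Prop) :
  (forall a, exists t, R a t) -> (forall a b t, R a t -> R b t -> a = b) ->
  #|A| <= #|T|.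
Proof.
move=> totR injR.
pose f a := proj1_sig (constructive_indefinite_description _ (totR a)).
have Rf a : R a (f a) by apply: proj2_sig.
by apply: (@leq_card _ _ f) => a b fab; apply: (injR a b (f a) (Rf a)); rewrite fab.
Qed.

Lemma GST_eq_row (m k : nat) (tau1 tau2 : {set 'I_m} -> {set {set 'I_m}} -> nat)
    (W0 : {set 'I_m}) :
  #|W0| = k -> sym_tau k tau1 -> sym_tau k tau2 -> tau1 W0 =1 tau2 W0 ->
  GST k tau1 =1 GST k tau2.
Proof.
move=> W0k [_ sym1] [_ sym2] eq12 P; apply/setP=> W; rewrite !inE.
case: eqP => //= Wk; apply: eq_forallb => G.
have [s sW] := perm_imset_card (etrans Wk (esym W0k)).
by rewrite (sym1 s) // (sym2 s) // sW eq12.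
Qed.

Lemma sGST_shattered_size (m k : nat) (S : seq (profile m)) :
  k <= m -> sGST_shattered k S -> 2 ^ size S <= k.+2 ^ 2 ^ 2 ^ m.
Proof.
move=> km [uS [_ [f0 [f1 [f01 shS]]]]].
have [W0 W0k] : exists W0 : {set 'I_m}, #|W0| = k.
  by apply: ex_set_card; rewrite card_ord.
pose P (i : 'I_(size S)) := nth [::] S i.
have PS i : P i \in S by apply: mem_nth.
pose realizes (b : {ffun 'I_(size S) -> bool})
    (t : {ffun {set {set 'I_m}} -> 'I_k.+2}) :=
  exists tau, [/\ sym_tau k tau, forall G, tau W0 G = t G
             & forall i, GST k tau (P i) = if b i then f0 (P i) else f1 (P i)].
have -> : 2 ^ size S = #|{ffun 'I_(size S) -> bool}|.
  by rewrite card_ffun card_bool card_ord.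
have -> : k.+2 ^ 2 ^ 2 ^ m = #|{ffun {set {set 'I_m}} -> 'I_k.+2}|.
  by rewrite card_ffun !card_set !card_ord.
apply: (@leq_card_rel _ _ realizes) => [b | b1 b2 t].
  pose B Q := if insub (index Q S) is Some i then b i else false.
  have [tau [[tau_le tau_sym] GSTB]] := shS B.
  exists [ffun G => inord (tau W0 G)], tau; split=> // [G | i].
    by rewrite ffunE inordK // ltnS tau_le.
  by rewrite GSTB // /B /P index_uniq // valK.
move=> [tau1 [sym1 row1 GST1]] [tau2 [sym2 row2 GST2]].
have eqGST := GST_eq_row W0k sym1 sym2 (fun G => etrans (row1 G) (esym (row2 G))).
apply/ffunP=> i; have := GST1 i; rewrite eqGST GST2.
by have := f01 _ (PS i); case: (b1 i); case: (b2 i) => // /[swap] ->; rewrite eqxx.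
Qed.

Section Layer.
Import all_order all_algebra Order.TTheory GRing.Theory Num.Theory.

Variables m k s0 : nat.
Hypotheses (k_gt0 : 0 < k) (s0_gt0 : 0 < s0).

Local Notation famact := (('P^*)^*)%act.

Lemma famactE (s : {perm 'I_m}) (G : {set {set 'I_m}}) :
  famact G s = [set s @: e | e : {set 'I_m} in G].
Proof. by []. Qed.

Lemma hist_enum (r : {set {set 'I_m}}) e : hist (enum r) e = (e \in r).
Proof. by rewrite ffunE count_uniq_mem ?enum_uniq // mem_enum. Qed.

Local Open Scope ring_scope.

Lemma in_GST_enum tau (r : {set {set 'I_m}}) W :
  (W \in GST k tau (enum r)) = (#|W| == k) &&
    [forall G, \sum_(x in r) (wvec G x - (tau W G)%:R / k%:R) < 0 :> rat].
Proof.
rewrite inE; congr (_ && _); apply: eq_forallb => G.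
congr (_ < 0); rewrite [RHS]big_mkcond; apply: eq_bigr => e _.
by rewrite hist_enum; case: (e \in r); rewrite ?mulr1 ?mulr0.
Qed.

Lemma sum_wvec_lt0 (r G : {set {set 'I_m}}) (t : nat) : (k <= t)%N ->
    (k < t)%N && (r != set0) || ~~ (r \subset G) ->
  \sum_(x in r) (wvec G x - t%:R / k%:R) < 0 :> rat.
Proof.
move=> kt strict.
have wle1 x : wvec G x <= 1 by rewrite ffunE; case: (x \in G).
have ge1 : 1 <= t%:R / k%:R :> rat by rewrite ler_pdivlMr ?ltr0n // mul1r ler_nat.
have [x xr xlt0] : exists2 x, x \in r & wvec G x - t%:R / k%:R < 0.
  case/orP: strict => [/andP[lt_kt /set0Pn[x xr]] | /subsetPn[x xr xG]]; exists x => //.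
    by rewrite subr_lt0 (le_lt_trans (wle1 x)) // ltr_pdivlMr ?ltr0n // mul1r ltr_nat.
  by rewrite ffunE (negbTE xG) subr_lt0 (lt_le_trans ltr01).
rewrite (bigD1 x) //=; apply: ltr_wnDr xlt0.
by apply: sumr_le0 => y _; rewrite subr_le0 (le_trans (wle1 y)).
Qed.

Lemma sum_wvec_self (r : {set {set 'I_m}}) :
  \sum_(x in r) (wvec r x - k%:R / k%:R) = 0 :> rat.
Proof. by apply: big1 => x xr; rewrite ffunE xr divff ?subrr // pnatr_eq0 -lt0n. Qed.

Local Close Scope ring_scope.

Definition layer := [set G : {set {set 'I_m}} | #|G| == s0].

Definition layer_reps := orbit_transversal famact [set: {perm 'I_m}] layer.

Lemma acts_layer : [acts [set: {perm 'I_m}], on layer | famact].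
Proof. by apply/actsP=> s _ G; rewrite !inE card_setact. Qed.

Lemma card_layer_reps r : r \in layer_reps -> #|r| = s0.
Proof.
have [_ /subsetP sub_layer _ _] := orbit_transversalP acts_layer.
by move=> /sub_layer; rewrite inE => /eqP.
Qed.

Lemma leq_bin_card_layer_reps : 'C(2 ^ m, s0) <= m`! * #|layer_reps|.
Proof.
have -> : 2 ^ m = #|{set 'I_m}| by rewrite card_set card_ord.
rewrite -card_draws -(card_Sn m) -cardsT.
exact: leq_card_orbit_transversal acts_layer.
Qed.

Definition layer_tau (B : pred {set {set 'I_m}}) (_ : {set 'I_m})
    (G : {set {set 'I_m}}) : nat :=
  if [exists r in layer_reps, ~~ B r && (G \in orbit famact setT r)] then k else k.+1.

Lemma layer_tau_sym B : sym_tau k (layer_tau B).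
Proof.
split=> [W G _ | s W G _]; rewrite /layer_tau; first by case: ifP.
congr (if _ then _ else _); apply: eq_existsb => r; rewrite -famactE.
by rewrite orbit_actr ?inE.
Qed.

Lemma GST_layer_tau_true (B : pred {set {set 'I_m}}) r :
  r \in layer_reps -> B r ->
  GST k (layer_tau B) (enum r) = [set W : {set 'I_m} | #|W| == k].
Proof.
move=> rX Br; apply/setP=> W; rewrite in_GST_enum inE; case: eqP => //= _.
apply/forallP=> G; rewrite /layer_tau.
case: existsP => [[r' /and3P[r'X nBr' /orbitP[s _ r's]]] | _]; last first.
  by apply: sum_wvec_lt0 => //; rewrite ltnSn -card_gt0 card_layer_reps ?s0_gt0.
apply: sum_wvec_lt0 => //; apply/orP; right; apply/negP => rG.
have Gr : G = r.
  by apply/esym/eqP; rewrite eqEcard rG -r's card_setact !card_layer_reps ?leqnn.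
have [_ _ orbX _] := orbit_transversalP acts_layer.
have /eqP r'r : r' == r by rewrite -orbX // -Gr -r's mem_orbit ?inE.
by move: nBr'; rewrite r'r Br.
Qed.

Lemma GST_layer_tau_false (B : pred {set {set 'I_m}}) r :
  r \in layer_reps -> ~~ B r ->
  GST k (layer_tau B) (enum r) = set0.
Proof.
move=> rX nBr; apply/setP=> W; rewrite in_GST_enum inE; apply/negbTE/nandP; right.
apply/negP=> /forallP/(_ r); rewrite /layer_tau.
have -> : [exists r' in layer_reps, ~~ B r' && (r \in orbit famact setT r')].
  by apply/existsP; exists r; rewrite rX nBr orbit_refl.
by rewrite sum_wvec_self ltxx.
Qed.

Lemma layer_shattered : k <= m ->
  sGST_shattered k [seq enum r | r : {set {set 'I_m}} <- enum layer_reps].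
Proof.
have enum_inj : injective (fun r : {set {set 'I_m}} => enum r).
  by move=> r r' rr'; apply/setP=> x; rewrite -[x \in r]mem_enum rr' mem_enum.
move=> km; split; first by rewrite (map_inj_uniq enum_inj) enum_uniq.
split.
  by apply/allP=> _ /mapP[r rX ->]; rewrite -cardE card_layer_reps // -[r \in _]mem_enum.
exists (fun=> [set W : {set 'I_m} | #|W| == k]), (fun=> set0); split.
  move=> _ _; have [W Wk] : exists W : {set 'I_m}, #|W| = k.
    by apply: ex_set_card; rewrite card_ord.
  by apply/set0Pn; exists W; rewrite inE Wk.
move=> B; exists (layer_tau (fun r => B (enum r))); split; first exact: layer_tau_sym.
move=> _ /mapP[r rX ->]; rewrite mem_enum in rX.
by case: ifP => Br; [apply: GST_layer_tau_true | apply: GST_layer_tau_false; rewrite ?Br].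
Qed.

End Layer.

Lemma leq_bin_succ n i : i < n - i -> 'C(n, i) <= 'C(n, i.+1).
Proof. by move=> lt_i; rewrite -(@leq_pmul2l i.+1) // mul_bin_left leq_mul. Qed.

Lemma leq_bin_half n i : 'C(n, i) <= 'C(n, n./2).
Proof.
have n_half := odd_double_half n.
wlog le_i_half : i / i <= n./2 => [mono | ].
  have [/mono // | lt_half_i] := leqP i n./2.
  have [le_i_n | lt_n_i] := leqP i n; last by rewrite bin_small.
  by rewrite -bin_sub // mono //; lia.
suff mono j : j + i <= n./2 -> 'C(n, i) <= 'C(n, j + i).
  by rewrite -(subnK le_i_half) mono ?subnK.
elim: j => // j IHj le_half; rewrite addSn.
by apply: leq_trans (IHj _) (leq_bin_succ _); lia.
Qed.

Lemma expn2_le_mul_bin_half n : 1 < n -> 2 ^ n <= n * 'C(n, n./2).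
Proof.
case: n => [|[|n]] // _; set c := 'C(n.+2, _).
have n2_le_c : n.+2 <= c by rewrite -{1}(bin1 n.+2) leq_bin_half.
have -> : 2 ^ n.+2 = \sum_(i < n.+3) 'C(n.+2, i).
  by rewrite -[2]/(1 + 1) expnDn; apply: eq_bigr => i _; rewrite !exp1n !muln1.
rewrite big_ord_recl big_ord_recr bin0 binn.
set s := \sum_(i < n.+1) _.
have : s <= \sum_(i < n.+1) c by apply: leq_sum => i _; apply: leq_bin_half.
by rewrite sum_nat_const card_ord /=; lia.
Qed.

Lemma ex_sGST_shattered_large m k : 0 < k -> k <= m ->
  exists S : seq (profile m), sGST_shattered k S /\ 2 ^ 2 ^ m <= 2 ^ m * m`! * size S.
Proof.
move=> k_gt0 km.
have two_le : 1 < 2 ^ m by rewrite -{1}(expn0 2) ltn_exp2l // (leq_trans k_gt0 km).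
have half_pos : 0 < (2 ^ m)./2 by rewrite half_gt0.
exists [seq enum r | r : {set {set 'I_m}} <- enum (layer_reps m (2 ^ m)./2)].
split; first exact: layer_shattered.
rewrite size_map -cardE -mulnA; apply: leq_trans (expn2_le_mul_bin_half two_le) _.
by rewrite leq_mul2l leq_bin_card_layer_reps orbT.
Qed.

Lemma ex_max_nat (P : nat -> Prop) b :
  P 0 -> (forall n, P n -> n <= b) -> exists d, P d /\ forall n, P n -> n <= d.
Proof.
elim: b => [|b IHb] P0 le_b; first by exists 0; split=> // n /le_b.
have [Pb1 | nPb1] := classic (P b.+1); first by exists b.+1.
apply: IHb => // n Pn; rewrite -ltnS ltn_neqAle le_b // andbT.
by apply/eqP=> nb; apply: nPb1; rewrite -nb.
Qed.

Lemma sGST_Ndim_exists m k : k <= m -> exists d, sGST_Ndim_is m k d.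
Proof.
move=> km; pose P d := exists S : seq (profile m), sGST_shattered k S /\ size S = d.
have P0 : P 0.
  exists [::]; do 3!split=> //; exists (fun=> set0), (fun=> set0).
  by split=> // B; exists (fun _ _ => 0); split; first split.
have [|d [Pd maxd]] := @ex_max_nat P (k.+2 ^ 2 ^ 2 ^ m) P0.
  move=> _ [S [shS <-]]; apply: leq_trans (sGST_shattered_size km shS).
  exact: ltnW (ltn_expl _ (ltnSn 1)).
by exists d; split=> // S shS; apply: maxd; exists S.
Qed.

(* Imported only here: they rebind [^] on [nat] to [Nat.pow], the reading under
   which [theorem10] is stated. *)
Import Reals Lra Psatz.

Lemma expn_Nat_pow a b : expn a b = Nat.pow a b.
Proof. by elim: b => // b IHb; rewrite expnS IHb. Qed.

Lemma fact_factorial n : Factorial.fact n = n`!.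
Proof. by elim: n => // n IHn; rewrite factS -IHn. Qed.

Lemma INR_pow2 n : INR (2 ^ n) = (2 ^ n)%R.
Proof. by rewrite pow_INR. Qed.

Lemma le_sqrt_2_div_PI_INR_div (a b d : nat) : 0 < b -> a <= b * d ->
  (sqrt (2 / PI) * INR a / INR b <= INR d)%R.
Proof.
move=> b_gt0 /leP/le_INR; rewrite mult_INR => le_ab.
have b_pos : (0 < INR b)%R by apply/lt_0_INR/leP.
have PI_ge2 : (2 <= PI)%R by have := PI2_3_2; lra.
have sqrt_le1 : (sqrt (2 / PI) <= 1)%R.
  rewrite -sqrt_1; apply: sqrt_le_1_alt; apply: (Rmult_le_reg_r PI); first lra.
  by rewrite /Rdiv Rmult_assoc Rinv_l; lra.
have a_ge0 := pos_INR a; have sqrt_ge0 := sqrt_pos (2 / PI).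
apply: (Rmult_le_reg_r (INR b)) => //.
by rewrite /Rdiv Rmult_assoc Rinv_l; [nra | lra].
Qed.

Lemma INR_le_mul_log2 (d M a : nat) : 0 < a -> 2 ^ d <= a ^ M ->
  (INR d <= INR M * (ln (INR a) / ln 2))%R.
Proof.
move=> a_gt0 /leP/le_INR; rewrite !pow_INR => le_pow.
have a_pos : (0 < INR a)%R by apply/lt_0_INR/leP.
have ln2_pos : (0 < ln 2)%R by have := ln_lt_2; lra.
have ln_le : (INR d * ln 2 <= INR M * ln (INR a))%R.
  rewrite -!ln_pow //; last lra.
  have [lt_pow | <-] := Rle_lt_or_eq_dec _ _ le_pow; last by rewrite /=; apply: Rle_refl.
  by apply/Rlt_le/ln_increasing => //; apply: pow_lt; rewrite /=; lra.
apply: (Rmult_le_reg_r (ln 2)) => //.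
by rewrite /Rdiv Rmult_assoc Rmult_assoc Rinv_l ?Rmult_1_r //; lra.
Qed.

Theorem theorem10 (m k : nat) :
  (1 <= k)%N -> (k <= m)%N ->
  exists d : nat, sGST_Ndim_is m k d /\
    (sqrt (2 / PI) * (2 ^ (2 ^ m)) / (2 ^ m * INR (Factorial.fact m)) <= INR d)%R /\
    (INR d <= 2 ^ (2 ^ m) * (ln (INR k + 2) / ln 2))%R.
Proof.
move=> k_gt0 km; have [d Nd] := sGST_Ndim_exists km; exists d; split=> //.
have [[S [shS <-]] max_size] := Nd.
have [S' [shS' large]] := ex_sGST_shattered_large k_gt0 km.
split.
  rewrite -!INR_pow2 -mult_INR; apply: le_sqrt_2_div_PI_INR_div.
    by rewrite -expn_Nat_pow fact_factorial muln_gt0 expn_gt0 fact_gt0.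
  rewrite -!expn_Nat_pow fact_factorial; apply: leq_trans large _.
  by rewrite leq_mul2l max_size ?orbT.
have -> : (INR k + 2)%R = INR k.+2 by rewrite !S_INR; lra.
rewrite -INR_pow2; apply: INR_le_mul_log2 => //.
by rewrite -!expn_Nat_pow; apply: sGST_shattered_size.
Qed.
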